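(* Let $Y$ be a solid vector space and $(X,d)$ a cone metric space over $Y$. Suppose $(x_n)_{n\ge0}$ is a sequence in $X$ with $d(x_n,x_m)\preceq b_n$ for all $n,m\ge0$ with $m\ge n$, where $(b_n)$ is a sequence in $Y$ with $b_n\to0$. Then: (i) $(x_n)$ is a Cauchy sequence in $X$; (ii) if $(x_n)$ converges to a point $x\in X$, then $d(x_n,x)\preceq b_n$ for all $n\ge0$.
   Context: Vector space with convergence: a real vector space $Y$ with a relation $\to$ between sequences in $Y$ and points of $Y$ (uniqueness of limits not assumed) such that (C1) $x_n\to x$, $y_n\to y$ imply $x_n+y_n\to x+y$; (C2) $x_n\to x$, $\lambda\in\mathbb R$ imply $\lambda x_n\to\lambda x$; (C3) $\lambda_n\to\lambda$ in $\mathbb R$ imply $\lambda_n x\to\lambda x$. $A\subseteq Y$ is open if $x_n\to x\in A$ implies $x_n\in A$ for all but finitely many $n$; closed if $x_n\to x$, $x_n\in A$ $\forall n$ imply $x\in A$; $A^\circ$ is the union of all open subsets of $A$. A cone is a nonempty closed $K$ with $\lambda K\subseteq K$ ($\lambda\ge0$), $K+K\subseteq K$, $K\cap(-K)=\{0\}$; solid if $K\ne\{0\}$, $K^\circ\ne\emptyset$. A vector ordering is a partial order $\preceq$ with (V1) $x\preceq y\Rightarrow x+z\preceq y+z$; (V2) $\lambda\ge0$, $x\preceq y\Rightarrow\lambda x\preceq\lambda y$; (V3) $x_n\to x$, $y_n\to y$, $x_n\preceq y_n$ $\forall n\Rightarrow x\preceq y$. Solid vector space: positive cone $K=\{x:x\succeq0\}$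 solid, with $x\prec y$ iff $y-x\in K^\circ$. Cone metric space over $Y$: nonempty $X$ with $d\colon X\times X\to Y$, $d(x,y)\succeq0$, $d(x,y)=0$ iff $x=y$, $d(x,y)=d(y,x)$, $d(x,y)\preceq d(x,z)+d(z,y)$. Convergence in $X$: $x_n\to x$ iff for every $c\succ0$, $d(x_n,x)\prec c$ for all but finitely many $n$. Cauchy: for every $c\succ0$ there is $N$ with $d(x_n,x_m)\prec c$ for all $n,m>N$. *)

From HB Require Import structures.
From mathcomp Require Import all_boot all_order all_algebra.
From mathcomp Require Import reals.
Set Implicit Arguments. Unset Strict Implicit. Unset Printing Implicit Defensive.
Import Order.TTheory GRing.Theory Num.Theory.
Local Open Scope ring_scope.

Section VSConv.
Variables (R : realType) (Y : lmodType R).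

Definition rconv (lam : nat -> R) (l : R) : Prop :=
  forall e : R, 0 < e -> exists N : nat, forall n, (N <= n)%N -> `|lam n - l| < e.

Definition is_vsconv (conv : (nat -> Y) -> Y -> Prop) : Prop :=
  [/\ (forall xs ys x y, conv xs x -> conv ys y -> conv (fun n => xs n + ys n) (x + y)),
      (forall xs x (l : R), conv xs x -> conv (fun n => l *: xs n) (l *: x)) &
      (forall (lam : nat -> R) l x, rconv lam l -> conv (fun n => lam n *: x) (l *: x))].

Variable conv : (nat -> Y) -> Y -> Prop.

Definition is_open (A : Y -> Prop) : Prop :=
  forall xs x, conv xs x -> A x -> exists N : nat, forall n, (N <= n)%N -> A (xs n).

Definition is_closed (A : Y -> Prop) : Prop :=
  forall xs x, conv xs x -> (forall n, A (xs n)) -> A x.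

Definition interior (A : Y -> Prop) : Y -> Prop :=
  fun x => exists U : Y -> Prop, [/\ is_open U, (forall y, U y -> A y) & U x].

Definition is_cone (K : Y -> Prop) : Prop :=
  [/\ (exists x, K x), is_closed K,
      (forall (l : R) x, 0 <= l -> K x -> K (l *: x)),
      (forall x y, K x -> K y -> K (x + y)) &
      (forall x, K x -> K (- x) -> x = 0)].

Definition is_solid_cone (K : Y -> Prop) : Prop :=
  [/\ is_cone K, (exists x, K x /\ x <> 0) & (exists x, interior K x)].

Definition is_vector_ordering (le : Y -> Y -> Prop) : Prop :=
  [/\ [/\ (forall x, le x x),
          (forall x y, le x y -> le y x -> x = y) &
          (forall x y z, le x y -> le y z -> le x z)],
      (forall x y z, le x y -> le (x + z) (y + z)),
      (forall (l : R) x y, 0 <= l -> le x y -> le (l *: x) (l *: y)) &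
      (forall xs ys x y, conv xs x -> conv ys y -> (forall n, le (xs n) (ys n)) -> le x y)].

Definition pos_cone (le : Y -> Y -> Prop) : Y -> Prop := fun x => le 0 x.

Definition is_solid_vspace (le : Y -> Y -> Prop) : Prop :=
  [/\ is_vsconv conv, is_vector_ordering le & is_solid_cone (pos_cone le)].

Definition slt (le : Y -> Y -> Prop) (x y : Y) : Prop :=
  interior (pos_cone le) (y - x).

Section ConeMetric.
Variables (le : Y -> Y -> Prop) (X : Type) (d : X -> X -> Y).

Definition is_cone_metric : Prop :=
  [/\ (forall x y, le 0 (d x y)),
      (forall x y, d x y = 0 <-> x = y),
      (forall x y, d x y = d y x) &
      (forall x y z, le (d x y) (d x z + d z y))].

Definition cm_conv (xs : nat -> X) (x : X) : Prop :=
  forall c, slt le 0 c -> exists N : nat, forall n, (N <= n)%N -> slt le (d (xs n) x) c.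

Definition cm_cauchy (xs : nat -> X) : Prop :=
  forall c, slt le 0 c -> exists N : nat, forall n m, (N < n)%N -> (N < m)%N ->
    slt le (d (xs n) (xs m)) c.
End ConeMetric.
End VSConv.

(* (i) Beyond an index where b_n is strictly below a given c >> 0, every d(x_n, x_m) is
   below c, since c - d(x_n, x_m) = (c - b_n) + (b_n - d(x_n, x_m)) is an interior point
   plus a cone point.  (ii) For c >> 0 and m large, d(x_n, x) <= d(x_n, x_m) + d(x_m, x)
   <= b_n + c; taking c = c0/(k+1) for a fixed interior c0 and letting k -> oo, the
   closedness axiom (V3) of the ordering gives d(x_n, x) <= b_n. *)
From mathcomp Require Import all_boot all_order all_algebra.
From mathcomp Require Import reals.
Import Order.TTheory GRing.Theory Num.Theory.
Set Implicit Arguments. Unset Strict Implicit.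
Local Open Scope ring_scope.

Lemma rconv_invSn (R : realType) : rconv (fun k : nat => (k.+1%:R : R)^-1) 0.
Proof.
move=> e e_gt0; exists (Num.Def.archi_bound e^-1) => n Nn.
have /archi_boundP bound_gt : 0 <= e^-1 by rewrite invr_ge0 ltW.
rewrite subr0 ger0_norm ?invr_ge0 ?ler0n //.
rewrite -(invrK e) ltf_pV2 ?posrE ?ltr0Sn ?invr_gt0 //.
by apply: (lt_le_trans bound_gt); rewrite ler_nat (leq_trans Nn).
Qed.

Section SolidVectorSpace.
Variables (R : realType) (Y : lmodType R)
  (conv : (nat -> Y) -> Y -> Prop) (le : Y -> Y -> Prop).
Hypothesis HY : is_solid_vspace conv le.

Let K := pos_cone le.

Lemma conv_add xs ys x y :
  conv xs x -> conv ys y -> conv (fun n => xs n + ys n) (x + y).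
Proof. by case: HY => [[C1 _ _] _ _]; apply: C1. Qed.

Lemma conv_scale xs x (l : R) : conv xs x -> conv (fun n => l *: xs n) (l *: x).
Proof. by case: HY => [[_ C2 _] _ _]; apply: C2. Qed.

Lemma conv_scalel (lam : nat -> R) l x :
  rconv lam l -> conv (fun n => lam n *: x) (l *: x).
Proof. by case: HY => [[_ _ C3] _ _]; apply: C3. Qed.

Lemma conv_cst c : conv (fun _ => c) c.
Proof.
have one_cvg : rconv (fun _ : nat => 1 : R) 1.
  by move=> e e_gt0; exists 0%N => n _; rewrite subrr normr0.
by have := conv_scalel c one_cvg; rewrite scale1r.
Qed.

Lemma vle_trans x y z : le x y -> le y z -> le x z.
Proof. by case: HY => [_ [[_ _ tr] _ _ _] _]; apply: tr. Qed.

Lemma vle_closed xs ys x y :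
  conv xs x -> conv ys y -> (forall n, le (xs n) (ys n)) -> le x y.
Proof. by case: HY => [_ [_ _ _ V3] _]; apply: V3. Qed.

Lemma vleE x y : le x y <-> K (y - x).
Proof.
case: HY => [_ [_ V1 _ _] _]; split => [/(V1 _ _ (- x))|/(V1 _ _ x)].
  by rewrite subrr.
by rewrite add0r subrK.
Qed.

Lemma pos_add x y : K x -> K y -> K (x + y).
Proof. by case: HY => [_ _ [[_ _ _ Kadd _] _ _]]; apply: Kadd. Qed.

Lemma pos_scale (l : R) x : 0 <= l -> K x -> K (l *: x).
Proof. by case: HY => [_ _ [[_ _ Kscale _ _] _ _]]; apply: Kscale. Qed.

Lemma vleD x1 x2 y1 y2 : le x1 y1 -> le x2 y2 -> le (x1 + x2) (y1 + y2).
Proof.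
move=> /vleE K1 /vleE K2; apply/vleE.
by rewrite opprD addrACA; apply: pos_add.
Qed.

Lemma interior_pos u : interior conv K u -> K u.
Proof. by case=> U [_ UK Uu]; apply: UK. Qed.

Lemma interior_addr_pos u k : interior conv K u -> K k -> interior conv K (u + k).
Proof.
case=> U [U_open UK Uu] Kk; exists (fun y => U (y - k)); split.
- move=> ys y ys_y Uy.
  by apply: U_open Uy; apply: conv_add ys_y (conv_cst (- k)).
- by move=> y /UK Ky; rewrite -(subrK k y); apply: pos_add.
- by rewrite addrK.
Qed.

Lemma interior_scale (t : R) u : 0 < t -> interior conv K u -> interior conv K (t *: u).
Proof.
move=> t_gt0 [U [U_open UK Uu]]; have t_neq0 : t != 0 by rewrite gt_eqF.
exists (fun y => U (t^-1 *: y)); split.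
- by move=> ys y /(conv_scale t^-1) ys_y Uy; apply: U_open Uy.
- move=> y /UK /(pos_scale (ltW t_gt0)).
  by rewrite scalerA divff // scale1r.
- by rewrite scalerA mulVf // scale1r.
Qed.

Lemma interior_sub_eventually c ys : interior conv K c -> conv ys 0 ->
  exists N, forall n, (N <= n)%N -> interior conv K (c - ys n).
Proof.
move=> [U [U_open UK Uc]] ys_0.
have c_sub : conv (fun n => c + (-1) *: ys n) (c + (-1) *: 0).
  by apply: conv_add; [apply: conv_cst | apply: conv_scale].
rewrite scaler0 addr0 in c_sub.
have [N UN] := U_open _ _ c_sub Uc; exists N => n Nn.
by exists U; split => //; rewrite -scaleN1r; apply: UN.
Qed.

(* A solid cone makes [le] "archimedean": slack by arbitrarily small interior points
   can be removed. *)
Lemma vle_of_le_add_interior a e :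
  (forall c, interior conv K c -> le a (e + c)) -> le a e.
Proof.
case: HY => [_ _ [_ _ [c0 c0_int]]] a_le.
pose cs k := (k.+1%:R : R)^-1 *: c0.
have cs_0 : conv cs 0 by rewrite -(scale0r c0); apply: conv_scalel; apply: rconv_invSn.
apply: (vle_closed (conv_cst a) (ys := fun k => e + cs k)).
  by rewrite -[X in conv _ X]addr0; apply: conv_add cs_0; apply: conv_cst.
by move=> k; apply/a_le/interior_scale => //; rewrite invr_gt0 ltr0Sn.
Qed.

Section DominatedSequence.
Variables (X : Type) (d : X -> X -> Y).
Hypothesis Hd : is_cone_metric le d.
Variables (xs : nat -> X) (b : nat -> Y).
Hypothesis xs_dominated : forall n m : nat, (n <= m)%N -> le (d (xs n) (xs m)) (b n).
Hypothesis b_0 : conv b 0.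

Lemma cm_cauchy_dominated : cm_cauchy conv le d xs.
Proof.
case: Hd => [_ _ d_sym _] c; rewrite /slt subr0 => c_int.
have [N b_small] := interior_sub_eventually c_int b_0.
have near_le : forall n m, (N < n)%N -> (n <= m)%N ->
    interior conv K (c - d (xs n) (xs m)).
  move=> n m Nn nm; rewrite -(subrK (b n) c) -addrA.
  apply: interior_addr_pos; first exact/b_small/ltnW.
  by have /vleE := xs_dominated nm.
exists N => n m Nn Nm; rewrite /slt.
by case: (leqP n m) => [|/ltnW] nm; [|rewrite d_sym]; apply: near_le.
Qed.

Lemma cm_conv_dominated x : cm_conv conv le d xs x -> forall n, le (d (xs n) x) (b n).
Proof.
case: Hd => [_ _ _ d_tri] xs_x n; apply: vle_of_le_add_interior => c c_int.
have [N d_small] : exists N, forall m, (N <= m)%N -> slt conv le (d (xs m) x) c.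
  by apply: xs_x; rewrite /slt subr0.
pose m := maxn N n.
have d_le_c : le (d (xs m) x) c by apply/vleE/interior_pos/d_small/leq_maxl.
apply: vle_trans (d_tri _ _ (xs m)) _.
by apply: vleD d_le_c; apply/xs_dominated/leq_maxr.
Qed.

End DominatedSequence.
End SolidVectorSpace.

Theorem theorem9p20 (R : realType) (Y : lmodType R)
  (conv : (nat -> Y) -> Y -> Prop) (le : Y -> Y -> Prop)
  (HY : is_solid_vspace conv le)
  (X : Type) (d : X -> X -> Y) (Hd : is_cone_metric le d)
  (xs : nat -> X) (b : nat -> Y)
  (Hb : forall n m : nat, (n <= m)%N -> le (d (xs n) (xs m)) (b n))
  (Hb0 : conv b 0) :
  cm_cauchy conv le d xs /\
  (forall x : X, cm_conv conv le d xs x -> forall n : nat, le (d (xs n) x) (b n)).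
Proof.
split; first exact: (cm_cauchy_dominated HY Hd Hb Hb0).
by move=> x; apply: (cm_conv_dominated HY Hd Hb).
Qed.
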